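(* Let $q$ be a prime power and let $n, t, m$ be positive integers with $t \geq m$. Choose a sequence $S=(g_1,\dots,g_t)$ of $t$ vectors of $\mathbb{F}_q^n$ uniformly at random (each $g_i$ independently and uniformly in $\mathbb{F}_q^n$). Then $$\mathbb{P}[e_m(S)=0]\leq \left(\frac{m}{q}\right)^{n}.$$
   Context: $\mathbb{F}_q^n$ is viewed as a commutative ring with coordinatewise addition and multiplication. For elements $g_1,\dots,g_t$ of a commutative ring, $e_m(g_1,\dots,g_t)=\sum_{1\leq i_1<\cdots<i_m\leq t}\prod_{j=1}^m g_{i_j}$ is the $m$-th elementary symmetric polynomial evaluated at them. *)

From HB Require Import structures.
From mathcomp Require Import all_boot all_order all_algebra all_field.
Set Implicit Arguments. Unset Strict Implicit. Unset Printing Implicit Defensive.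
Import Order.TTheory GRing.Theory Num.Theory.
Local Open Scope ring_scope.

Definition esym_eval (R : pzSemiRingType) (t m : nat) (g : 'I_t -> R) : R :=
  \sum_(I : {set 'I_t} | #|I| == m) \prod_(i in I) g i.

Notation vec F n := {ffun 'I_n -> F}.

Definition prob_esym_zero (F : finFieldType) (n t m : nat) : rat :=
  (#|[set S : {ffun 'I_t -> vec F n} | esym_eval m S == 0]|%:R
   / #|{ffun 'I_t -> vec F n}|%:R).

From HB Require Import structures.
From mathcomp Require Import all_boot all_order all_algebra all_field.
From mathcomp Require Import zify.
Set Implicit Arguments. Unset Strict Implicit. Unset Printing Implicit Defensive.
Import Order.TTheory GRing.Theory Num.Theory.
Local Open Scope ring_scope.

(* Since e_(m+1)(a, y) = a e_m(y) + e_(m+1)(y) is affine in a, for each y it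
   has at most one root a unless e_m(y) = 0.  Hence the number Z(t, m) of
   zeros of e_m in F^t satisfies Z(t+1, m+1) <= q^t + (q-1) Z(t, m), and as
   e_0 = 1 never vanishes, induction gives q Z(t, m) <= m q^t.  A sequence of
   vectors of F^n is a zero of e_m iff each of its n coordinate sequences is,
   so the zeros in (F^n)^t number exactly Z(t, m)^n. *)

Definition ffun_cons (T : Type) t (a : T) (y : {ffun 'I_t -> T}) :
  {ffun 'I_t.+1 -> T} :=
  [ffun i => if unlift ord0 i is Some j then y j else a].

Lemma ffun_cons0 (T : Type) t (a : T) (y : {ffun 'I_t -> T}) :
  ffun_cons a y ord0 = a.
Proof. by rewrite ffunE unlift_none. Qed.

Lemma ffun_cons_lift (T : Type) t (a : T) (y : {ffun 'I_t -> T}) j :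
  ffun_cons a y (lift ord0 j) = y j.
Proof. by rewrite ffunE liftK. Qed.

Section EsymCoef.

Variable R : comNzSemiRingType.

Lemma esym_eval0 t (g : 'I_t -> R) : esym_eval 0 g = 1.
Proof.
rewrite /esym_eval (eq_bigl (pred1 set0)) => [|I]; last by rewrite cards_eq0.
by rewrite big_pred1_eq big_set0.
Qed.

Lemma esym_eval_coef t m (g : 'I_t -> R) :
  esym_eval m g = (\prod_(i < t) (g i *: 'X + 1))`_m.
Proof.
rewrite bigA_distr /=.
under eq_bigr => I _.
  rewrite big_if /= big1_eq mulr1.
  under eq_bigr do rewrite -mul_polyC.
  rewrite big_split /= prodr_const -rmorph_prod /= mul_polyC.
over.
by rewrite coef_sumMXn; apply: eq_bigl => I; rewrite /= cardE.
Qed.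

Lemma esym_eval_cons t m (a : R) (y : {ffun 'I_t -> R}) :
  esym_eval m.+1 (ffun_cons a y) = a * esym_eval m y + esym_eval m.+1 y.
Proof.
rewrite !esym_eval_coef big_ord_recl ffun_cons0.
under eq_bigr do rewrite ffun_cons_lift.
by rewrite mulrDl mul1r coefD -scalerAl coefZ coefXM.
Qed.

End EsymCoef.

Lemma big_ffun_cons (R : Type) (idx : R) (op : Monoid.com_law idx)
    (T : finType) t (F : {ffun 'I_t.+1 -> T} -> R) :
  \big[op/idx]_(x : {ffun 'I_t.+1 -> T}) F x =
  \big[op/idx]_(a : T) \big[op/idx]_(y : {ffun 'I_t -> T}) F (ffun_cons a y).
Proof.
rewrite pair_big.
rewrite (reindex (fun p : T * {ffun 'I_t -> T} => ffun_cons p.1 p.2)) //.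
exists (fun x : {ffun 'I_t.+1 -> T} => (x ord0, [ffun j => x (lift ord0 j)])).
  move=> [a y] _ /=.
  rewrite ffun_cons0; congr pair.
  by apply/ffunP => j; rewrite ffunE ffun_cons_lift.
move=> x _ /=; apply/ffunP => i.
by rewrite ffunE; case: unliftP => [j ->|->]; rewrite ?ffunE.
Qed.

Lemma card_affine_eq0_le (R : finIdomainType) (c1 c0 : R) :
  (#|[set a : R | (a * c1 + c0 == 0)%R]| <= if (c1 == 0)%R then #|R| else 1)%N.
Proof.
case: eqP => [_ | /eqP c1_neq0]; first exact: max_card.
apply/card_le1_eqP => a b; rewrite !inE => /eqP ha /eqP hb.
apply: (mulIf c1_neq0); apply: (addIr c0); by rewrite ha hb.
Qed.

Definition esym_zero_set (R : finPzSemiRingType) t m : {set {ffun 'I_t -> R}} :=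
  [set x : {ffun 'I_t -> R} | esym_eval m x == 0].

Section ScalarCount.

Variable F : finIdomainType.
Local Notation q := #|F|.

Let q_gt0 : (0 < q)%N. Proof. by apply/card_gt0P; exists 0. Qed.

Lemma card_esym_zero_set_cons t m :
  (#|esym_zero_set F t.+1 m.+1| <= q ^ t + #|esym_zero_set F t m| * q.-1)%N.
Proof.
set Z := esym_zero_set F t m.
have -> : #|esym_zero_set F t.+1 m.+1| =
    (\sum_(y : {ffun 'I_t -> F})
       #|[set a : F | (a * esym_eval m y + esym_eval m.+1 y == 0)%R]|)%N.
  rewrite -sum1_card big_mkcond big_ffun_cons exchange_big /=.
  apply: eq_bigr => y _; rewrite -sum1_card [RHS]big_mkcond /=.
  by apply: eq_bigr => a _; rewrite !inE esym_eval_cons.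
have -> : (q ^ t + #|Z| * q.-1 =
           \sum_(y : {ffun 'I_t -> F}) (1 + (y \in Z) * q.-1))%N.
  rewrite big_split /= sum1_card card_ffun card_ord; congr (_ + _)%N.
  rewrite -sum1_card big_distrl [LHS]big_mkcond /=.
  by apply: eq_bigr => y _; case: (y \in Z).
apply: leq_sum => y _; apply: leq_trans (card_affine_eq0_le _ _) _.
by rewrite inE; case: (_ == 0); rewrite ?mul1n ?add1n ?prednK.
Qed.

Lemma card_esym_zero_set_le t m : (m <= t)%N ->
  (#|esym_zero_set F t m| * q <= m * q ^ t)%N.
Proof.
have zero_set0 t' : esym_zero_set F t' 0 = set0.
  by apply/setP => x; rewrite !inE esym_eval0 oner_eq0.
elim: t m => [|t IHt] [|m] //= le_mt; rewrite ?zero_set0 ?cards0 //.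
have := IHt m le_mt; have := card_esym_zero_set_cons t m; rewrite expnS.
case: q q_gt0 => // q' _ /=; nia.
Qed.

End ScalarCount.

Lemma prod_ffunE (aT : finType) (R : pzSemiRingType) (I : Type) (r : seq I)
    (P : pred I) (F : I -> {ffun aT -> R}) x :
  (\prod_(i <- r | P i) F i) x = \prod_(i <- r | P i) F i x.
Proof. by elim/big_rec2: _ => [|i _ y _ <-]; rewrite !ffunE. Qed.

Definition ffun_transpose (aT bT : finType) (T : Type)
    (S : {ffun aT -> {ffun bT -> T}}) : {ffun bT -> {ffun aT -> T}} :=
  [ffun b => [ffun a => S a b]].

Lemma ffun_transposeK (aT bT : finType) (T : Type) :
  cancel (@ffun_transpose aT bT T) (@ffun_transpose bT aT T).
Proof. by move=> S; apply/ffunP => a; apply/ffunP => b; rewrite !ffunE. Qed.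

Lemma esym_eval_ffunE (R : pzSemiRingType) (aT : finType) t m
    (S : {ffun 'I_t -> {ffun aT -> R}}) x :
  esym_eval m S x = esym_eval m (ffun_transpose S x).
Proof.
rewrite sum_ffunE; apply: eq_bigr => I _.
by rewrite prod_ffunE; apply: eq_bigr => i _; rewrite !ffunE.
Qed.

Lemma card_esym_eval_ffun_eq0 (R : finPzSemiRingType) (aT : finType) t m :
  #|[set S : {ffun 'I_t -> {ffun aT -> R}} | esym_eval m S == 0]| =
  (#|esym_zero_set R t m| ^ #|aT|)%N.
Proof.
rewrite -card_ffun_on.
rewrite -(on_card_preimset (f := @ffun_transpose _ aT R)); last first.
  by apply: onW_bij; exists (@ffun_transpose _ _ R); apply: ffun_transposeK.
apply: eq_card => S; rewrite !inE.
apply/eqP/forallP => [S0 x | S0].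
  by rewrite inE -esym_eval_ffunE S0 ffunE.
apply/ffunP => x.
by move: (S0 x); rewrite inE esym_eval_ffunE [RHS]ffunE => /eqP.
Qed.

Theorem proposition2p2 (F : finFieldType) (n t m : nat)
  (hn : (0 < n)%N) (ht : (0 < t)%N) (hm : (0 < m)%N) (htm : (m <= t)%N) :
  prob_esym_zero F n t m <= ((m%:R : rat) / (#|F|%:R)) ^+ n.
Proof.
have q_gt0 : (0 < #|F|)%N by apply/card_gt0P; exists 0.
have scalar_bound :
    #|esym_zero_set F t m|%:R / #|F|%:R ^+ t <= m%:R / #|F|%:R :> rat.
  rewrite -natrX ler_pdivrMr ?ltr0n ?expn_gt0 ?q_gt0 //.
  rewrite mulrAC ler_pdivlMr ?ltr0n //.
  by rewrite -!natrM ler_nat card_esym_zero_set_le.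
rewrite /prob_esym_zero card_esym_eval_ffun_eq0 !card_ffun !card_ord.
rewrite expnAC !natrX -expr_div_n.
by apply: lerXn2r; rewrite // nnegrE divr_ge0 ?exprn_ge0.
Qed.
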